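(* Let $n\in\mathbb{N}$, let $A\subset\mathbb{R}$, let $a\in\mathbb{R}$ with $a\notin\overline{A}$ (the closure of $A$), and let $f:A\cup\{a\}\to\mathbb{R}$. Suppose that for every $k\in\{1,\dots,n\}$ the set $\{[x_1,\dots,x_k;f] : x_1,\dots,x_k\in A \text{ pairwise distinct}\}$ is bounded. Then for every $k\in\{1,\dots,n\}$ the set $\{[x_1,\dots,x_k;f] : x_1,\dots,x_k\in A\cup\{a\} \text{ pairwise distinct}\}$ is bounded.
   Context: For a function $f$ and pairwise distinct points $x_1,\dots,x_m$ of its domain, divided differences are defined recursively by $[x_1;f]:=f(x_1)$ and $[x_1,\dots,x_{m+1};f]:=\dfrac{[x_2,\dots,x_{m+1};f]-[x_1,\dots,x_m;f]}{x_{m+1}-x_1}$; they are symmetric functions of the points. *)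

From mathcomp Require Import all_boot all_order all_algebra.
From mathcomp Require Import all_classical all_reals topology normedtype.
Set Implicit Arguments. Unset Strict Implicit. Unset Printing Implicit Defensive.
Import Order.TTheory GRing.Theory Num.Theory numFieldNormedType.Exports.
Local Open Scope ring_scope.
Local Open Scope classical_set_scope.

(* divdiff f m x = [x 0, x 1, ..., x m ; f]  (m+1 points), following
   [x1;f] = f x1,
   [x1..x_{m+1};f] = ([x2..x_{m+1};f] - [x1..x_m;f]) / (x_{m+1} - x1). *)
Fixpoint divdiff (R : realType) (f : R -> R) (m : nat) (x : nat -> R) : R :=
  match m with
  | 0 => f (x 0%N)
  | m'.+1 => (divdiff f m' (fun i => x i.+1) - divdiff f m' x) / (x m'.+1 - x 0%N)
  end.

Definition distinct_pts_in (R : realType) (S : set R) (k : nat) (x : nat -> R) : Prop :=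
  (forall i, (i < k)%N -> S (x i)) /\
  (forall i j, (i < k)%N -> (j < k)%N -> i <> j -> x i <> x j).

Definition dd_bounded (R : realType) (f : R -> R) (S : set R) (k : nat) : Prop :=
  exists M : R, forall x : nat -> R, distinct_pts_in S k x -> `|divdiff f k.-1 x| <= M.

From mathcomp Require Import all_boot all_order all_algebra.
From mathcomp Require Import all_classical all_reals topology normedtype.
From mathcomp Require Import ring.
Set Implicit Arguments. Unset Strict Implicit. Unset Printing Implicit Defensive.
Import Order.TTheory GRing.Theory Num.Theory numFieldNormedType.Exports.
Local Open Scope ring_scope.
Local Open Scope classical_set_scope.

(** Divided differences are symmetric in their nodes, so a point [a] among
    the nodes may be moved to the last position.  The recursion then writes
    [[x_1, ..., x_{k-1}, a; f]] as the difference of a divided difference of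
    [k-1] nodes of [A ∪ {a}] and one of [k-1] nodes of [A], divided by
    [a - x_1]; both are bounded (the first by induction on [k]) and
    [|a - x_1|] is bounded below since [a] is not in the closure of [A]. *)

Section LagrangeForm.
Variables (F : fieldType) (f : F -> F).

Definition ddweight (s : seq F) (y : F) : F := \prod_(z <- s | z != y) (y - z)^-1.

(* The closed form of the divided difference on distinct nodes [s]; it is
   visibly invariant under permutations of [s]. *)
Definition ddsum (s : seq F) : F := \sum_(y <- s) f y * ddweight s y.

Lemma ddweight_cons z s y :
  ddweight (z :: s) y = (if z != y then (y - z)^-1 else 1) * ddweight s y.
Proof. by rewrite /ddweight big_cons; case: ifP => _ //; rewrite mul1r. Qed.

Lemma ddweight_rcons z s y :
  ddweight (rcons s z) y = ddweight s y * (if z != y then (y - z)^-1 else 1).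
Proof. by rewrite /ddweight big_rcons. Qed.

Lemma ddsum_recursion u v s : uniq (u :: rcons s v) ->
  ddsum (u :: rcons s v) = (ddsum (rcons s v) - ddsum (u :: s)) / (v - u).
Proof.
rewrite /= rcons_uniq mem_rcons in_cons negb_or => /andP[/andP[uv us] /andP[vs _]].
have vu : v - u != 0 by rewrite subr_eq0 eq_sym.
have uv' : u - v != 0 by rewrite subr_eq0.
rewrite /ddsum big_cons big_rcons /= big_rcons /= big_cons /=.
rewrite !ddweight_cons !ddweight_rcons eqxx /= uv eq_sym uv.
have inner : \sum_(y <- s) f y * ddweight (u :: rcons s v) y
    = (\sum_(y <- s) f y * ddweight (rcons s v) y
       - \sum_(y <- s) f y * ddweight (u :: s) y) / (v - u).
  rewrite -sumrB mulr_suml big_seq [RHS]big_seq; apply: eq_bigr => y ys.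
  have uy : u != y by apply: contraNneq us => ->.
  have vy : v != y by apply: contraNneq vs => ->.
  have yu : y - u != 0 by rewrite subr_eq0 eq_sym.
  have yv : y - v != 0 by rewrite subr_eq0 eq_sym.
  by rewrite !ddweight_cons !ddweight_rcons uy vy; field; rewrite yu yv vu.
by rewrite inner; field; rewrite vu uv'.
Qed.

Lemma ddsum_perm s t : perm_eq s t -> ddsum s = ddsum t.
Proof.
move=> st; rewrite /ddsum (perm_big t st); apply: eq_bigr => y _.
by rewrite /ddweight (perm_big t st).
Qed.

End LagrangeForm.

Section Symmetry.
Variables (R : realType) (f : R -> R).

Definition nodes (x : nat -> R) (m : nat) : seq R := [seq x i | i <- iota 0 m.+1].

Lemma map_iota_succ (x : nat -> R) k n :
  [seq x i.+1 | i <- iota k n] = [seq x i | i <- iota k.+1 n].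
Proof. by elim: n k => //= n IH k; rewrite IH. Qed.

Lemma nodesS (x : nat -> R) m : nodes x m.+1 = x 0%N :: nodes (fun i => x i.+1) m.
Proof. by rewrite /nodes map_iota_succ. Qed.

Lemma nodes_behead (x : nat -> R) m :
  nodes (fun i => x i.+1) m = rcons [seq x i | i <- iota 1 m] (x m.+1).
Proof. by rewrite /nodes map_iota_succ -[X in iota 1 X]addn1 iotaD map_cat cats1. Qed.

Lemma divdiff_ddsum m x : uniq (nodes x m) -> divdiff f m x = ddsum f (nodes x m).
Proof.
elim: m x => [|m IH] x xu.
  by rewrite /ddsum /ddweight /nodes /= !big_cons !big_nil eqxx /= mulr1 addr0.
rewrite nodesS nodes_behead in xu *.
set mid := [seq x i | i <- iota 1 m].
have xmid : nodes x m = x 0%N :: mid by [].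
have xu' := xu; rewrite /= mem_rcons in_cons negb_or in xu'.
case/andP: xu' => /andP[_ x0mid] midu.
rewrite /= !IH ?nodes_behead ?xmid /= ?x0mid //; last by rewrite rcons_uniq in midu; case/andP: midu.
by rewrite ddsum_recursion.
Qed.

Lemma divdiff_perm m x y : uniq (nodes x m) -> perm_eq (nodes x m) (nodes y m) ->
  divdiff f m x = divdiff f m y.
Proof.
move=> xu xy; have yu : uniq (nodes y m) by rewrite -(perm_uniq xy).
by rewrite !divdiff_ddsum //; apply: ddsum_perm.
Qed.

End Symmetry.

Definition swapn (p q i : nat) : nat := if i == p then q else if i == q then p else i.

Lemma swapnK p q : involutive (swapn p q).
Proof.
move=> i; rewrite /swapn.
case: (eqVneq i p) => [->|ip]; first by rewrite eqxx; case: eqVneq.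
case: (eqVneq i q) => [->|iq]; first by rewrite eqxx.
by rewrite (negbTE ip) (negbTE iq).
Qed.

Lemma swapn_lt p q N i : (p < N)%N -> (q < N)%N -> (i < N)%N -> (swapn p q i < N)%N.
Proof. by move=> hp hq hi; rewrite /swapn; repeat case: ifP. Qed.

Lemma perm_nodes_swapn (R : realType) (x : nat -> R) p q m :
  (p <= m)%N -> (q <= m)%N -> perm_eq (nodes (x \o swapn p q) m) (nodes x m).
Proof.
move=> hp hq; rewrite /nodes (map_comp x (swapn p q)); apply: perm_map; apply: uniq_perm.
- by rewrite map_inj_uniq ?iota_uniq //; apply: can_inj (swapnK p q).
- exact: iota_uniq.
move=> i; rewrite mem_iota add0n; apply/mapP/idP.
  by move=> [j]; rewrite mem_iota add0n => hj ->; apply: swapn_lt.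
by move=> hi; exists (swapn p q i); rewrite ?swapnK // mem_iota add0n swapn_lt.
Qed.

Section DistinctPoints.
Variables (R : realType) (S : set R).

Lemma distinct_pts_uniq k x : distinct_pts_in S k.+1 x -> uniq (nodes x k).
Proof.
move=> [_ xd]; rewrite map_inj_in_uniq ?iota_uniq // => i j.
rewrite !mem_iota !add0n => hi hj xij; apply: contrapT => ij.
exact: xd i j hi hj ij xij.
Qed.

Lemma distinct_pts_behead k x :
  distinct_pts_in S k.+1 x -> distinct_pts_in S k (fun i => x i.+1).
Proof.
by move=> [xS xd]; split=> [i ik | i j ik jk ij]; [apply: xS | apply: xd => // -[]].
Qed.

Lemma distinct_pts_belast k x : distinct_pts_in S k.+1 x -> distinct_pts_in S k x.
Proof.
by move=> [xS xd]; split=> [i /ltnW ik | i j /ltnW ik /ltnW jk]; [apply: xS | apply: xd].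
Qed.

Lemma distinct_pts_swapn k p q x : (p < k)%N -> (q < k)%N ->
  distinct_pts_in S k x -> distinct_pts_in S k (x \o swapn p q).
Proof.
move=> hp hq [xS xd]; split=> [i hi|i j hi hj ij]; first by apply/xS/swapn_lt.
apply: xd; rewrite ?swapn_lt //.
by move=> e; apply: ij; rewrite -(swapnK p q i) e swapnK.
Qed.

End DistinctPoints.

Lemma not_closure_separated (R : realType) (A : set R) (a : R) :
  ~ closure A a -> exists2 e : R, 0 < e & forall y, A y -> e <= `|y - a|.
Proof.
move=> aA; apply: contrapT => nsep; apply: aA => B /nbhs_ballP [e e0 eB].
apply: contrapT => AB; apply: nsep; exists e => // y Ay.
rewrite leNgt; apply/negP => ya; apply: AB; exists y; split => //.
by apply: eB; rewrite -ball_normE /= distrC.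
Qed.

Section AddPoint.
Variables (R : realType) (f : R -> R) (A : set R) (a : R).

Lemma dd_bounded1_setU1 : dd_bounded f A 1 -> dd_bounded f (A `|` [set a]) 1.
Proof.
move=> [M hM]; exists (Num.max M `|f a|) => x [xS _] /=.
rewrite le_max; case: (xS 0%N isT) => [x0A|->]; last by rewrite lexx orbT.
apply/orP; left; apply: hM; split; first by case.
by do 2!case=> //.
Qed.

Lemma divdiff_point_last m x p : (p <= m)%N -> x p = a ->
  distinct_pts_in (A `|` [set a]) m.+1 x ->
  exists y, [/\ distinct_pts_in (A `|` [set a]) m.+1 y, y m = a,
    forall i, (i < m)%N -> A (y i) & divdiff f m x = divdiff f m y].
Proof.
move=> pm xpa xd; set y := x \o swapn p m.
have yd : distinct_pts_in (A `|` [set a]) m.+1 y by apply: distinct_pts_swapn.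
have yma : y m = a by rewrite /y /= /swapn eqxx; case: eqVneq => [->|].
exists y; split => //.
- move=> i im; case: (yd.1 i (ltnW im)) => // yia.
  by have /eqP/(yd.2 i m (ltnW im) (ltnSn m)) := ltn_eqF im; rewrite yia yma.
- apply: divdiff_perm; first exact: distinct_pts_uniq xd.
  by rewrite perm_sym perm_nodes_swapn.
Qed.

Lemma dd_boundedS_setU1 m e : 0 < e -> (forall y, A y -> e <= `|y - a|) ->
  dd_bounded f (A `|` [set a]) m.+1 -> dd_bounded f A m.+1 -> dd_bounded f A m.+2 ->
  dd_bounded f (A `|` [set a]) m.+2.
Proof.
move=> e0 sep [C hC] [M1 hM1] [M2 hM2].
exists (Num.max M2 ((C + M1) / e)) => x xd; rewrite le_max; apply/orP.
have [[p [pm xpa]] | noa] := pselect (exists p, (p < m.+2)%N /\ x p = a); last first.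
  left; apply: hM2; split; last exact: xd.2.
  by move=> i im; case: (xd.1 i im) => // xia; case: noa; exists i.
right; have [y [yd yma yA ->]] := divdiff_point_last (m := m.+1) pm xpa xd; rewrite /=.
have nC : `|divdiff f m (fun i => y i.+1)| <= C by apply/hC/distinct_pts_behead.
have nM1 : `|divdiff f m y| <= M1.
  apply: hM1; split; [exact: yA | exact: (distinct_pts_belast yd).2].
have den : e <= `|y m.+1 - y 0%N| by rewrite yma distrC; apply/sep/yA.
rewrite normrM normfV; apply: ler_pM.
- exact: normr_ge0.
- by rewrite invr_ge0 normr_ge0.
- exact: le_trans (ler_normB _ _) (lerD nC nM1).
- by rewrite lef_pV2 ?posrE // (lt_le_trans e0 den).
Qed.

End AddPoint.

Theorem lemma1 (R : realType) (n : nat) (A : set R) (a : R) (f : R -> R) :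
  ~ closure A a ->
  (forall k : nat, (1 <= k <= n)%N -> dd_bounded f A k) ->
  forall k : nat, (1 <= k <= n)%N -> dd_bounded f (A `|` [set a]) k.
Proof.
move=> aA hA; have [e e0 sep] := not_closure_separated aA.
elim=> [//|[_ k1|m IH km]]; first exact/dd_bounded1_setU1/hA.
have km' : (1 <= m.+1 <= n)%N by case/andP: km => _ /ltnW ->.
by apply: dd_boundedS_setU1 e0 sep (IH km') (hA _ km') (hA _ km).
Qed.
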